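(* For each $\sigma\ge 1$, let $K_\sigma$ be any string of the form $K_\sigma=s_{\sigma-1}^{k_{\sigma-1}}\cdots s_1^{k_1}s_0^{k_0}$, where $s_0<s_1<\dots<s_{\sigma-1}$ are all the letters of an ordered alphabet $\Sigma_\sigma$ of size $\sigma$ and all $k_i>1$ are integers. Then $\chi(K_\sigma)/r(K_\sigma)\to 2$ as $\sigma\to\infty$.
   Context: Strings are $0$-indexed. $\$$ is an end-marker not in the alphabet, smaller than every letter, appended once at the end. $r(K)$ is the number of runs (maximal blocks of one repeated letter) in $\operatorname{BWT}(K\$)$, the last column of the matrix of lexicographically sorted cyclic rotations of $K\$$. For a string $v$, a substring $x$ (possibly empty) is right-maximal if $xa$ and $xb$ are substrings of $v$ for two distinct letters $a\neq b$; such words $xa$ are right-extensions of $v$. A set $S$ of positions of $v$ is suffixient if every right-extension of $v$ is a suffix of $v[0..j]$ for some $j\in S$. $\chi(K)$ is the minimum size of a suffixient set for $K\$$. *)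

From mathcomp Require Import all_boot all_order all_algebra.
Set Implicit Arguments. Unset Strict Implicit. Unset Printing Implicit Defensive.
Import Order.TTheory GRing.Theory Num.Theory.

(* Letters are natural numbers (ordered by <); the end-marker $ is [None],
   and strings with the end-marker are [seq (option nat)], letter a being [Some a]. *)
Definition sym := option nat.

Definition sym_lt (x y : sym) : bool :=
  match x, y with
  | None, None => false
  | None, Some _ => true
  | Some _, None => false
  | Some a, Some b => (a < b)%N
  end.

Fixpoint lex_le (u v : seq sym) : bool :=
  match u, v with
  | [::], _ => true
  | _ :: _, [::] => false
  | x :: u', y :: v' => sym_lt x y || ((x == y) && lex_le u' v')
  end.

Definition with_end (K : seq nat) : seq sym := rcons (map Some K) None.

Definition BWT (w : seq sym) : seq sym :=
  map (fun t => last None t) (sort lex_le [seq rot i w | i <- iota 0 (size w)]).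

Definition runs (s : seq sym) : nat :=
  match s with
  | [::] => 0
  | x :: s' => (count id (pairmap (fun a b => a != b) x s')).+1
  end.

Definition r_of (K : seq nat) : nat := runs (BWT (with_end K)).

Definition substrings (v : seq sym) : seq (seq sym) :=
  [seq take l (drop i v) | i <- iota 0 (size v).+1, l <- iota 0 (size v).+1].

Definition right_maximal (v x : seq sym) : bool :=
  has (fun a => has (fun b =>
     (a != b) && infix (rcons x a) v && infix (rcons x b) v) v) v.

Definition right_extension (v y : seq sym) : bool :=
  match y with
  | [::] => false
  | b :: y' => infix y v && right_maximal v (belast b y')
  end.

Definition suffixient (v : seq sym) (S : {set 'I_(size v)}) : bool :=
  all (fun y => right_extension v y ==>
                [exists j in S, suffix y (take (nat_of_ord j).+1 v)])
      (substrings v).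

(* minimum size of a suffixient set (the full set of positions is always suffixient) *)
Definition chi_of (K : seq nat) : nat :=
  let v := with_end K in
  \big[minn/size v]_(S : {set 'I_(size v)} | suffixient S) #|S|.

Definition Kstring (sigma : nat) (s k : nat -> nat) : seq nat :=
  flatten [seq nseq (k (sigma.-1 - j)) (s (sigma.-1 - j)) | j <- iota 0 sigma].

From mathcomp Require Import all_boot all_order all_algebra.
From mathcomp Require Import zify ring.
Set Implicit Arguments. Unset Strict Implicit. Unset Printing Implicit Defensive.
Import Order.TTheory GRing.Theory Num.Theory.

(* K$ is non-increasing ($ being the least symbol), so the rotation of K$ starting
   further right is lexicographically smaller: BWT(K$) = rev(K)$, and r(K) is the
   number of runs of K$, namely sigma + 1.
   In a non-increasing string every letter forms a single run.  A right-maximal word x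
   (both xa and xb occur, a <> b) therefore contains no letter change, since such a
   change would pin both occurrences to the same place.  So a right-extension either ends
   at the first or last position of a run, or is a power of one letter and can be slid to
   the end of its run.  Conversely, when every run but that of $ has length at least 2,
   the last position of a run is the only end of the right-extension formed by the whole
   run, and the first position of a run is the only end of the two-letter right-extension
   entering it.  The minimum suffixient set is thus the set of these 2 sigma run
   boundaries, and chi/r = 2 sigma / (sigma + 1). *)

Lemma geq_trans : transitive geq.
Proof. by move=> y x z /= xy yz; apply: leq_trans xy. Qed.

Lemma constant_nth (T : eqType) (x0 : T) s :
  (forall i, i.+1 < size s -> nth x0 s i = nth x0 s i.+1) -> constant s.
Proof.
elim: s => [//|a [//|b s] IH] eq_next.
have ab : a = b := eq_next 0 isT.
rewrite /= ab eqxx; apply: IH => i; exact: eq_next i.+1.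
Qed.

Lemma rcons_nseq (T : Type) m (x : T) : rcons (nseq m x) x = nseq m.+1 x.
Proof. by elim: m => //= m ->. Qed.

Lemma card_ord_pred n (P : pred nat) : #|[set p : 'I_n | P p]| = count P (iota 0 n).
Proof.
rewrite cardsE -sum1_card (eq_bigl (fun i : 'I_n => P i)) //.
by rewrite -(big_mkord P (fun _ => 1)) sum1_count /index_iota subn0.
Qed.

Definition sym_rank (x : sym) : nat := if x is Some a then a.+1 else 0.

Lemma sym_rank_inj : injective sym_rank.
Proof. by case=> [a|] [b|] // [->]. Qed.

Lemma lex_le_cons x y u w :
  lex_le (x :: u) (y :: w) = (sym_rank x < sym_rank y) || (x == y) && lex_le u w.
Proof. by case: x y => [a|] [b|]. Qed.

Lemma lex_le_trans : transitive lex_le.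
Proof.
move=> w u; elim: u w => [|x u IH] [|y w] [|z t] //; rewrite !lex_le_cons.
case/orP=> [xy|/andP[/eqP <- uw]]; case/orP=> [yz|/andP[/eqP <- wt]].
- by rewrite (ltn_trans xy yz).
- by rewrite xy.
- by rewrite yz.
- by rewrite eqxx (IH _ _ uw wt) orbT.
Qed.

Lemma lex_le_anti : antisymmetric lex_le.
Proof.
elim=> [|x u IH] [|y w] //; rewrite !lex_le_cons => /andP[].
case/orP=> [xy|/andP[/eqP exy uw]]; case/orP=> [yx|/andP[/eqP eyx wu]].
- by have := ltn_trans xy yx; rewrite ltnn.
- by rewrite eyx ltnn in xy.
- by rewrite exy ltnn in yx.
- by rewrite exy (IH w) // uw wu.
Qed.

Lemma lex_le_total : total lex_le.
Proof.
elim=> [|x u IH] [|y w] //; rewrite !lex_le_cons.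
case: (ltngtP (sym_rank x) (sym_rank y)) => [||/sym_rank_inj ->] //=; first by rewrite orbT.
by rewrite eqxx; apply: IH.
Qed.

Lemma nth_with_end K i : i < size K -> nth None (with_end K) i = Some (nth 0 K i).
Proof. by move=> iK; rewrite nth_rcons size_map iK (nth_map 0). Qed.

Lemma lex_le_drop_with_end K i j X Y : sorted geq K -> i < j <= size K ->
  lex_le (drop j (with_end K) ++ X) (drop i (with_end K) ++ Y).
Proof.
elim: K i j => [|a K IH] [|i] [|j] //=; rewrite ?ltnS ?ltn0 ?andbF // => aK jK;
  last exact: IH (path_sorted aK) _.
move: jK; rewrite leq_eqVlt => /orP[/eqP ->|jK].
  by rewrite /with_end -(size_map Some) drop_rcons // drop_size.
have aKj : nth 0 K j <= a.
  by apply/(allP (order_path_min geq_trans aK))/mem_nth.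
rewrite (drop_nth None) ?size_rcons ?size_map 1?ltnW // nth_with_end //.
rewrite cat_cons lex_le_cons ltnS ltn_neqAle aKj andbT -/(with_end K).
case: (eqVneq (nth 0 K j) a) => [->|//]; rewrite eqxx /=.
by have := IH 0 j.+1 (path_sorted aK); rewrite drop0; apply.
Qed.

Lemma BWT_with_end K : sorted geq K -> BWT (with_end K) = rcons (map Some (rev K)) None.
Proof.
move=> sK; rewrite /BWT; set v := with_end K.
set rots := [seq rot i v | i <- iota 0 (size v)].
have vK : size v = (size K).+1 by rewrite size_rcons size_map.
have -> : sort lex_le rots = rev rots.
  apply: (sorted_eq lex_le_trans lex_le_anti); first exact: sort_sorted lex_le_total _.
    rewrite rev_sorted sorted_map.
    apply: (@sub_in_sorted _ (gtn (size v)) ltn) (iota_ltn_sorted 0 _).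
      move=> i j /= iv jv ij; apply: lex_le_drop_with_end => //.
      by rewrite ij -ltnS -vK.
    by apply/allP => i; rewrite mem_iota.
  by rewrite perm_sort perm_sym perm_rev.
rewrite /rots [LHS]map_rev -map_comp vK /= rot0 last_rcons rev_cons map_rev.
congr (rcons (rev _) _); rewrite -[in RHS](mkseq_nth 0 K) /mkseq (iotaDl 1 0) -!map_comp.
apply/eq_in_map => i; rewrite mem_iota => /andP[_ iK] /=.
by rewrite /rot add1n last_cat (take_nth None) ?vK 1?ltnW // last_rcons nth_with_end.
Qed.

Lemma runs_cons x y t : runs [:: x, y & t] = (x != y) + runs (y :: t).
Proof. by rewrite /runs /= addnS. Qed.

Lemma runs_rcons s x y : s != [::] -> runs (rcons s y) = runs s + (last x s != y).
Proof.
case: s => [//|z t] _; rewrite /runs rcons_cons -cats1 pairmap_cat count_cat /=.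
by rewrite addn0 addSn.
Qed.

Lemma runs_rcons_notin s y : y \notin s -> runs (rcons s y) = (runs s).+1.
Proof.
case: s => [//|x t] yNs.
have lastNy : last x t != y by apply: contraNneq yNs => <-; apply: mem_last.
by rewrite (runs_rcons x) //= lastNy addn1.
Qed.

Lemma runs_rev s : runs (rev s) = runs s.
Proof.
elim: s => [//|x [//|y t] IH].
rewrite rev_cons (runs_rcons x); last by rewrite -size_eq0 size_rev.
by rewrite IH runs_cons rev_cons last_rcons addnC eq_sym.
Qed.

Lemma None_notin_map (s : seq nat) : None \notin map Some s.
Proof. by elim: s. Qed.

Lemma r_of_sorted K : sorted geq K -> r_of K = runs (with_end K).
Proof.
move=> sK; rewrite /r_of BWT_with_end // /with_end.
by rewrite !runs_rcons_notin ?None_notin_map // map_rev runs_rev.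
Qed.

Definition change (v : seq sym) (p : nat) : bool := nth None v p != nth None v p.+1.

(* Every run of [v], except possibly the last one, has length at least 2. *)
Definition long_runs (v : seq sym) : Prop :=
  forall p, p.+1 < size v -> change v p -> 0 < p /\ nth None v p.-1 = nth None v p.

Section RunBoundaries.

Variable v : seq sym.
Local Notation n := (size v).
Local Notation letter p := (nth None v p).

Definition run_end p := (p.+1 < n) && change v p.
Definition run_start p := (0 < p) && change v p.-1.
Definition run_boundaries : {set 'I_n} := [set p : 'I_n | run_end p || run_start p].

Hypothesis v_sorted : sorted geq (map sym_rank v).
Hypothesis v_last_start : run_start n.-1.
Hypothesis v_long_runs : long_runs v.

Lemma rank_nth_le i j : i <= j -> j < n -> sym_rank (letter j) <= sym_rank (letter i).
Proof.
move=> ij jn; rewrite -!(nth_map None 0 sym_rank) ?(leq_ltn_trans ij) //.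
apply: (sorted_leq_nth geq_trans leqnn 0 v_sorted) => //.
by rewrite inE size_map (leq_ltn_trans ij).
by rewrite inE size_map.
Qed.

Lemma letter_between m t p :
  m <= t <= p -> p < n -> letter m = letter p -> letter t = letter p.
Proof.
case/andP=> mt tp pn mp; apply: sym_rank_inj; apply/eqP.
by rewrite eqn_leq (rank_nth_le tp pn) -mp (rank_nth_le mt) ?(leq_ltn_trans tp pn).
Qed.

Lemma run_end_max p j : run_end p -> j < n -> letter j = letter p -> j <= p.
Proof.
case/andP=> p1n chp jn jp; rewrite leqNgt; apply: contraNN chp => pj.
have -> : letter p.+1 = letter p by rewrite -jp (@letter_between p _ j) ?leqnSn ?pj ?jn ?jp.
by rewrite /change eqxx.
Qed.

Lemma run_end_inj p q : run_end p -> run_end q -> letter p = letter q -> p = q.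
Proof.
move=> endp endq pq; have pn : p < n by case/andP: endp => /ltnW.
have qn : q < n by case/andP: endq => /ltnW.
by apply/eqP; rewrite eqn_leq (run_end_max endq) ?(run_end_max endp).
Qed.

Lemma suffix_takeP y j : j < n -> reflect
  (size y <= j.+1 /\ forall t, t < size y -> letter (j.+1 - size y + t) = nth None y t)
  (suffix y (take j.+1 v)).
Proof.
move=> jn; rewrite suffixE size_takel //; set m := size y.
apply: (iffP eqP) => [yE|[yj yv]].
  have yj : m <= j.+1 by rewrite /m -yE size_drop size_takel // leq_subr.
  by split=> // t ty; rewrite -[in RHS]yE nth_drop nth_take //; lia.
apply: (@eq_from_nth _ None); first by rewrite size_drop size_takel // subKn.
move=> t; rewrite size_drop size_takel // subKn // => ty.
by rewrite nth_drop nth_take -?yv //; lia.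
Qed.

Lemma suffix_take_rcons y a j : j < n ->
  suffix (rcons y a) (take j.+1 v) = (a == letter j) && suffix y (take j v).
Proof. by move=> jn; rewrite (take_nth None) // suffix_rcons. Qed.

Lemma suffix1_take a j : j < n -> suffix [:: a] (take j.+1 v) = (a == letter j).
Proof.
by move=> jn; rewrite -[[:: a]]/(rcons [::] a) suffix_take_rcons // suffix0s andbT.
Qed.

Lemma suffix_take_infix y j : suffix y (take j v) -> infix y v.
Proof. by move/suffix_infix_trans; apply; apply: infix_take. Qed.

Lemma infix_suffix_take y : infix y v -> 0 < size y ->
  exists2 j, j < n & suffix y (take j.+1 v).
Proof.
case/infixP=> w [z vE] y0.
have wy0 : 0 < size (w ++ y) by rewrite size_cat addn_gt0 y0 orbT.
exists (size (w ++ y)).-1; rewrite prednK // vE catA ?size_cat ?leq_addr //.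
by rewrite take_size_cat ?size_cat //; apply: suffix_suffix.
Qed.

Lemma right_maximalP x : reflect
  (exists a b, [/\ a != b, infix (rcons x a) v & infix (rcons x b) v])
  (right_maximal v x).
Proof.
have mem_ext c : infix (rcons x c) v -> c \in v.
  by move/mem_infix; apply; rewrite mem_rcons mem_head.
apply: (iffP hasP) => [[a _ /hasP[b _ /andP[/andP[ab xa] xb]]]|[a [b [ab xa xb]]]].
  by exists a, b.
exists a; first exact: mem_ext.
by apply/hasP; exists b; rewrite ?ab ?xa ?xb //; apply: mem_ext.
Qed.

Lemma right_extension_rcons x e :
  right_extension v (rcons x e) = infix (rcons x e) v && right_maximal v x.
Proof. by case: x => [|b x] //=; rewrite belast_rcons. Qed.

Lemma mem_substrings y : infix y v -> y \in substrings v.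
Proof.
case/infixP=> w [z vE]; apply/allpairsPdep; exists (size w), (size y).
rewrite !mem_iota !add0n !ltnS vE drop_size_cat // take_size_cat // !size_cat.
by split=> //=; rewrite ?leq_addr // addnCA leq_addr.
Qed.

Lemma suffixientP (S : {set 'I_n}) : reflect
  (forall x e, infix (rcons x e) v -> right_maximal v x ->
     exists2 j : 'I_n, j \in S & suffix (rcons x e) (take j.+1 v))
  (suffixient S).
Proof.
apply: (iffP allP) => [suffS x e xe rmx | extS y _].
  have /implyP := suffS _ (mem_substrings xe).
  rewrite right_extension_rcons xe rmx => /(_ isT) /existsP[j /andP[jS ej]].
  by exists j.
apply/implyP; case/lastP: y => [//|x e]; rewrite right_extension_rcons => /andP[xe rmx].
by have [j jS ej] := extS x e xe rmx; apply/existsP; exists j; rewrite jS.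
Qed.

Lemma run_end_in_suffixient (S : {set 'I_n}) (p : 'I_n) :
  suffixient S -> run_end p -> p \in S.
Proof.
move=> /suffixientP suffS endp; have /andP[p1n chp] := endp.
have [p0 prevp] := v_long_runs p1n chp.
set c := letter p in prevp *; set m := index c v.
have mp : m < p.
  rewrite /m -prevp (leq_ltn_trans (index_nth _ _)) ?ltn_predL //.
  exact: leq_ltn_trans (leq_pred p) (ltn_ord p).
have mc : letter m = c by rewrite /m nth_index // /c mem_nth.
have run_c t : m <= t <= p -> letter t = c.
  by move=> mtp; apply: letter_between mtp (ltn_ord p) mc.
(* The whole run of [c] is a right-extension, and it occurs only ending at [p]. *)
have run_suffix : suffix (nseq (p - m).+1 c) (take p.+1 v).
  apply/suffix_takeP => //; rewrite size_nseq; split=> [|t tp]; first lia.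
  by rewrite nth_nseq tp run_c //; lia.
have ext_c : infix (rcons (nseq (p - m) c) c) v.
  by rewrite rcons_nseq; apply: suffix_take_infix run_suffix.
have rm : right_maximal v (nseq (p - m) c).
  apply/right_maximalP; exists c, (letter p.+1); split=> //.
  apply: (@suffix_take_infix _ p.+2); rewrite suffix_take_rcons // eqxx.
  by apply: suffix_trans run_suffix; apply: suffix_cons.
have [j jS] := suffS _ _ ext_c rm.
rewrite rcons_nseq => /(suffix_takeP _ (ltn_ord j)); rewrite size_nseq => -[jm jc].
have jp : j <= p.
  apply: run_end_max => //; rewrite -/c.
  have := jc (p - m) (ltnSn _); rewrite nth_nseq ltnSn => <-; congr nth; lia.
have pj : p <= j.
  have := jc 0 isT; rewrite nth_nseq /= => jc0.
  have pos_n : j.+1 - (p - m).+1 + 0 < n by apply: leq_ltn_trans (ltn_ord j); lia.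
  by have := index_nth None pos_n; rewrite jc0 -/m; lia.
by rewrite (_ : p = j) //; apply: val_inj; apply/eqP; rewrite eqn_leq jp pj.
Qed.

Lemma run_start_in_suffixient (S : {set 'I_n}) (p : 'I_n) :
  suffixient S -> run_start p -> p \in S.
Proof.
move=> /suffixientP suffS /andP[p0 chq]; set q := p.-1 in chq.
have pn : p < n := ltn_ord p.
have qp : q.+1 = p := prednK p0.
have endq : run_end q by rewrite /run_end qp pn chq.
have [q0 prevq] := v_long_runs (proj1 (andP endq)) chq.
(* The pair [letter q; letter p] is a right-extension, occurring only ending at [p]. *)
have dd : suffix [:: letter q; letter q] (take q.+1 v).
  rewrite -[[:: _; _]]/(rcons [:: letter q] (letter q)) suffix_take_rcons; last lia.
  by rewrite eqxx -{2}(prednK q0) suffix1_take ?prevq ?eqxx //; lia.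
have dc : suffix [:: letter q; letter p] (take p.+1 v).
  rewrite -[[:: _; _]]/(rcons [:: letter q] (letter p)) suffix_take_rcons //.
  by rewrite eqxx -qp suffix1_take ?eqxx //; lia.
have rm : right_maximal v [:: letter q].
  apply/right_maximalP; exists (letter q), (letter p).
  by split; [rewrite -qp | apply: suffix_take_infix dd | apply: suffix_take_infix dc].
have [j jS] := suffS [:: letter q] (letter p) (suffix_take_infix dc) rm.
rewrite suffix_take_rcons // => /andP[/eqP pj qj].
have j0 : 0 < j by move: qj; case: (nat_of_ord j) => //; rewrite take0 suffixs0.
have jn := ltn_ord j; move: qj; rewrite -(prednK j0) suffix1_take => [/eqP qj|]; last lia.
have endj : run_end j.-1 by rewrite /run_end prednK // jn /change prednK // -qj -pj -qp /=.
have jq := run_end_inj endj endq (esym qj).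
by rewrite (_ : p = j) //; apply: val_inj; rewrite /= -qp -jq prednK.
Qed.

Lemma run_boundaries_sub (S : {set 'I_n}) : suffixient S -> run_boundaries \subset S.
Proof.
move=> suffS; apply/subsetP => p; rewrite inE => /orP[].
  exact: run_end_in_suffixient.
exact: run_start_in_suffixient.
Qed.

Lemma right_maximal_constant x : right_maximal v x -> constant x.
Proof.
case/right_maximalP=> a [b [ab xa xb]]; apply: (@constant_nth _ None) => i i1x.
apply/eqP/negPn/negP => chx; set m := size x in i1x.
(* A letter change inside [x] is a run end, which fixes where [x] occurs in [v]. *)
have occ c : infix (rcons x c) v -> exists j,
    [/\ m <= j < n, letter j = c, run_end (j - m + i) & letter (j - m + i) = nth None x i].
  move=> /infix_suffix_take [|j jn /(suffix_takeP _ jn)]; first by rewrite size_rcons.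
  rewrite size_rcons subSS -/m => -[xj xv]; exists j.
  have at_t t : t <= m -> letter (j - m + t) = nth None (rcons x c) t by move=> ?; apply: xv.
  have nth_x t : t < m -> letter (j - m + t) = nth None x t.
    by move=> tx; rewrite at_t ?nth_rcons -/m ?tx // ltnW.
  split; first lia.
  - by rewrite -[j](subnK (xj : m <= j)) at_t // nth_rcons -/m ltnn eqxx.
  - by rewrite /run_end /change -addnS !nth_x // ?chx ?andbT; lia.
  - exact: nth_x (ltnW i1x).
have [ja [jam ea enda la]] := occ a xa; have [jb [jbm eb endb lb]] := occ b xb.
have := run_end_inj enda endb; rewrite la lb => /(_ erefl) eqj.
by move: ab; rewrite -ea -eb (_ : ja = jb) ?eqxx //; lia.
Qed.

Lemma nseq_suffix_run_boundary m e q : q < n -> suffix (nseq m.+1 e) (take q.+1 v) ->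
  exists2 j : 'I_n, j \in run_boundaries & suffix (nseq m.+1 e) (take j.+1 v).
Proof.
move Ed : (n - q) => d; elim: d q Ed => [|d IH] q Ed qn ends; first lia.
have [qB|qNB] := boolP (run_end q || run_start q); first by exists (Ordinal qn); rewrite ?inE.
have q1n : q.+1 < n.
  rewrite ltn_neqAle qn andbT; apply: contraNneq qNB => qE.
  by rewrite (_ : q = n.-1) ?v_last_start ?orbT // -qE.
have eq_next : letter q = letter q.+1.
  by move: qNB; rewrite negb_or /run_end q1n /change negbK => /andP[/eqP].
have eq_e : e = letter q by move: ends; rewrite -rcons_nseq suffix_take_rcons // => /andP[/eqP].
apply: (IH q.+1) => //; first lia.
rewrite -rcons_nseq suffix_take_rcons // -eq_next -eq_e eqxx /=.
exact: suffix_trans (suffix_cons _ _) ends.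
Qed.

Lemma run_boundaries_suffixient : suffixient run_boundaries.
Proof.
apply/suffixientP => x e xe rmx.
have xe0 : 0 < size (rcons x e) by rewrite size_rcons.
have [q qn ends] := infix_suffix_take xe xe0.
have [qB|qNB] := boolP (run_end q || run_start q); first by exists (Ordinal qn); rewrite ?inE.
have xe_nseq : rcons x e = nseq (size x).+1 e.
  rewrite -rcons_nseq; congr (rcons _ e).
  case/(constantP None): (right_maximal_constant rmx) => c xc.
  move: ends; rewrite xc size_nseq; case: (size x) => [//|k].
  rewrite suffix_take_rcons // => /andP[/eqP eq_e].
  case: q qn qNB eq_e => [|q] qn qNB eq_e; first by rewrite take0 suffixs0.
  rewrite -rcons_nseq suffix_take_rcons ?(ltnW qn) // => /andP[/eqP eq_c _].
  move: qNB; rewrite negb_or /run_start /change /= -eq_c -eq_e => /andP[_ /negPn/eqP ->].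
  by rewrite rcons_nseq.
by rewrite xe_nseq in ends *; apply: nseq_suffix_run_boundary qn ends.
Qed.

Lemma card_run_boundaries : #|run_boundaries| = 2 * count (change v) (iota 0 n.-1).
Proof.
have n1 : 1 < n by case/andP: v_last_start; lia.
have disjoint_ends_starts : count (predI run_end run_start) (iota 0 n) = 0.
  rewrite (eq_count (a2 := pred0)) ?count_pred0 // => p /=.
  apply/negP => /andP[/andP[p1n chp] /andP[_ chq]].
  have [p0 prev] := v_long_runs p1n chp.
  by move: chq; rewrite /change prednK // prev eqxx.
have count_ends : count run_end (iota 0 n) = count (change v) (iota 0 n.-1).
  have last_not_end : run_end n.-1 = false by rewrite /run_end prednK ?ltnn // ltnW.
  rewrite -{1}(prednK (ltnW n1)) -addn1 iotaD count_cat /= add0n last_not_end /= !addn0.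
  apply: eq_in_count => p; rewrite mem_iota /run_end => /andP[_ pn].
  by rewrite (_ : p.+1 < n) //; lia.
have count_starts : count run_start (iota 0 n) = count (change v) (iota 0 n.-1).
  by rewrite -{1}(prednK (ltnW n1)) /= (iotaDl 1 0) count_map.
have := count_predUI run_end run_start (iota 0 n); rewrite disjoint_ends_starts addn0.
rewrite /run_boundaries (card_ord_pred _ (predU run_end run_start)) => ->.
by rewrite count_ends count_starts addnn mul2n.
Qed.

Lemma min_suffixient_card :
  \big[minn/n]_(S : {set 'I_n} | suffixient S) #|S| = #|run_boundaries|.
Proof.
have min_le := bigmin_le_cond (T := nat) n (fun S : {set 'I_n} => #|S|)
  run_boundaries_suffixient.
rewrite minEnat leEnat in min_le; apply/eqP; rewrite eqn_leq min_le /=.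
apply: (big_ind (leq #|run_boundaries|)) => [|a b ra rb|S suffS].
- by apply: leq_trans (max_card _) _; rewrite card_ord.
- by rewrite leq_min ra rb.
- exact/subset_leq_card/run_boundaries_sub.
Qed.

End RunBoundaries.

Lemma runs_count v : v != [::] -> runs v = (count (change v) (iota 0 (size v).-1)).+1.
Proof.
case: v => [//|x t] _; rewrite /runs /=; congr S.
elim: t x => [//|y t IH] x; rewrite /= IH (iotaDl 1 0) count_map.
by congr (_ + _); apply: eq_count.
Qed.

Lemma sorted_rank_with_end K : sorted geq K -> sorted geq (map sym_rank (with_end K)).
Proof.
case: K => [//|a K] aK; rewrite /with_end map_rcons -map_comp /= rcons_path path_map.
by apply/andP; split; [exact: aK | exact: leq0n].
Qed.

Lemma run_start_with_end K : K != [::] -> run_start (with_end K) (size (with_end K)).-1.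
Proof.
rewrite -size_eq0 -lt0n => K0; rewrite /run_start /change size_rcons size_map /= K0.
by rewrite prednK // nth_with_end ?prednK ?leqnn // nth_rcons size_map ltnn eqxx.
Qed.

Lemma chi_of_long_runs K : sorted geq K -> K != [::] -> long_runs (with_end K) ->
  chi_of K = 2 * (runs (with_end K)).-1.
Proof.
move=> sK K0 lK; rewrite /chi_of min_suffixient_card ?card_run_boundaries ?runs_count //.
  by rewrite -size_eq0 size_rcons.
all: by [apply: sorted_rank_with_end | apply: run_start_with_end].
Qed.

Lemma runs_nseq_cat m c w : 0 < m -> c \notin w -> runs (nseq m c ++ w) = (runs w).+1.
Proof.
case: m => // m _ cNw; elim: m => [|m IH].
  case: w cNw => [//|y t]; rewrite in_cons negb_or => /andP[cy _].
  by rewrite (runs_cons c y) cy.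
by rewrite -IH (runs_cons c c) eqxx.
Qed.

Lemma long_runs_nseq_cat c m w : 1 < m -> long_runs w -> long_runs (nseq m c ++ w).
Proof.
move=> m1 lw p; rewrite size_cat size_nseq /change !nth_cat !size_nseq !nth_nseq => pn.
have [p1m|mp] := ltnP p.+1 m; first by rewrite (ltnW p1m) eqxx.
have [pm|mp'] := ltnP p m.
  by rewrite (leq_ltn_trans (leq_pred p) pm) => _; split=> //; lia.
rewrite subSn // => chw; have p1w : (p - m).+1 < size w by lia.
have [pm0 prev] := lw (p - m) p1w chw.
have -> : (p.-1 < m) = false by apply/negbTE; rewrite -leqNgt; lia.
split; first lia.
by rewrite (_ : p.-1 - m = (p - m).-1) ?prev //; lia.
Qed.

Lemma KstringS n (s k : nat -> nat) :
  Kstring n.+1 s k = nseq (k n) (s n) ++ Kstring n s k.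
Proof.
rewrite /Kstring /= subn0 (iotaDl 1 0) -map_comp; congr (_ ++ flatten _).
by apply: eq_map => j /=; rewrite subnDA subn1.
Qed.

Lemma mem_Kstring n s k a : a \in Kstring n s k -> exists2 i, i < n & a = s i.
Proof.
case/flatten_mapP=> j; rewrite mem_iota => /andP[_ jn] /nseqP[-> _].
by exists (n.-1 - j) => //; lia.
Qed.

Section Kstring.

Variables (s k : nat -> nat).

Lemma Kstring_sorted n : (forall i j, i < j < n -> s i < s j) -> sorted geq (Kstring n s k).
Proof.
elim: n => [//|n IH] sinc.
have sK : sorted geq (Kstring n s k).
  by apply: IH => i j /andP[ij jn]; apply: sinc; rewrite ij ltnW.
rewrite KstringS !(sorted_pairwise geq_trans) in sK *.
rewrite pairwise_cat sK andbT; apply/andP; split.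
  apply/allrelP => a b /nseqP[-> _] /mem_Kstring[i i_n ->] /=.
  by apply/ltnW/sinc; rewrite i_n ltnSn.
apply/(pairwiseP 0) => i j; rewrite !inE size_nseq => ik jk _.
by rewrite !nth_nseq ik jk /=.
Qed.

Lemma long_runs_with_end_Kstring n : (forall i, i < n -> 1 < k i) ->
  long_runs (with_end (Kstring n s k)).
Proof.
elim: n => [_ [|p] //|n IH] k2.
rewrite /with_end KstringS map_cat rcons_cat map_nseq.
by apply: long_runs_nseq_cat; [exact: k2 | apply: IH => i /ltnW /k2].
Qed.

Lemma runs_with_end_Kstring n : (forall i j, i < j < n -> s i < s j) ->
  (forall i, i < n -> 0 < k i) -> runs (with_end (Kstring n s k)) = n.+1.
Proof.
elim: n => [//|n IH] sinc kpos.
rewrite /with_end KstringS map_cat rcons_cat map_nseq runs_nseq_cat //.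
- rewrite IH // => [i j /andP[ij jn]|i /ltnW]; last exact: kpos.
  by apply: sinc; rewrite ij ltnW.
- exact: kpos.
rewrite mem_rcons in_cons (mem_map (@Some_inj _)) /=.
apply/negP => /mem_Kstring[i i_n sni].
by have := sinc i n; rewrite i_n ltnSn sni ltnn => /(_ isT).
Qed.

End Kstring.

Lemma chi_r_Kstring n s k : 0 < n -> (forall i j, i < j < n -> s i < s j) ->
  (forall i, i < n -> 1 < k i) ->
  chi_of (Kstring n s k) = 2 * n /\ r_of (Kstring n s k) = n.+1.
Proof.
move=> n0 sinc k2; have kpos i : i < n -> 0 < k i by move/k2/ltnW.
have sK := Kstring_sorted k sinc; have runsK := runs_with_end_Kstring sinc kpos.
have K0 : Kstring n s k != [::].
  by apply/eqP => K0; move: runsK; rewrite K0 => -[n_0]; rewrite -n_0 in n0.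
rewrite chi_of_long_runs ?r_of_sorted ?runsK //; exact: long_runs_with_end_Kstring.
Qed.

Local Open Scope ring_scope.

Lemma ratio_to_two (R : archiRealFieldType) (eps : R) : 0 < eps ->
  exists N, forall n, (N <= n)%N -> `|(2 * n)%:R / n.+1%:R - 2| < eps.
Proof.
move=> eps0; exists (Num.bound (2 / eps)) => n Nn.
have n1 : 0 < n.+1%:R :> R by rewrite ltr0n.
have -> : (2 * n)%:R / n.+1%:R - 2 = - (2 / n.+1%:R) :> R.
  by rewrite -addn1 natrM natrD; field; rewrite nat1r lt0r_neq0.
rewrite normrN ger0_norm ?divr_ge0 ?ltW // ltr_pdivrMr // mulrC -ltr_pdivrMr //.
apply: lt_le_trans (archi_boundP (ltW (divr_gt0 _ eps0))) _ => //.
by rewrite ler_nat; apply: leq_trans Nn _.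
Qed.

Theorem theorem1 (s k : nat -> nat -> nat) :
  (forall sigma i j, (i < j < sigma)%N -> (s sigma i < s sigma j)%N) ->
  (forall sigma i, (i < sigma)%N -> (1 < k sigma i)%N) ->
  forall eps : rat, 0 < eps ->
  exists N : nat, forall sigma : nat, (N <= sigma)%N ->
    `| (chi_of (Kstring sigma (s sigma) (k sigma)))%:R
         / (r_of (Kstring sigma (s sigma) (k sigma)))%:R - 2 | < eps.
Proof.
move=> sinc k2 eps eps0; have [N closeN] := ratio_to_two eps0.
exists N.+1 => sigma Nsigma.
have sigma0 : (0 < sigma)%N by apply: leq_trans Nsigma.
have [-> ->] := chi_r_Kstring sigma0 (sinc sigma) (k2 sigma).
exact/closeN/ltnW.
Qed.
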